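(* Let $T$ be a tree and $H$ a graph. Let $V\subseteq V(T(H))$ and let $V_1,V_2\subseteq V$ with $V_1\cup V_2=V$ and $V_1\cap V_2=\emptyset$ (one of them possibly empty). Suppose there are two vertices $u,v$ of $T$ and vertices $1,\dots,t$ of $H$ such that for each $i\in\{1,\dots,t\}$ the role of $u^i$ differs from the role of $v^i$. Then $T(H)$ has a matching of size $t$ such that the two ends of each of its edges have different roles.
   Context: Graph $T(H)$: for a tree $T$ and a graph $H$ with $V(H)=\{1,\dots,m\}$, $T(H)$ has vertices $v^i$ ($v\in V(T)$, $1\le i\le m$); for each $v$ the vertices $v^1,\dots,v^m$ span a copy $H^v$ of $H$ ($v^iv^j$ an edge iff $ij\in E(H)$), and $u^iv^i$ is an edge for each $i$ whenever $uv\in E(T)$. Roles with respect to $V_1,V_2$: each vertex of $T(H)$ has exactly one of three roles: belonging to $V_1$, belonging to $V_2$, or belonging to $V(T(H))\setminus V$. *)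

From mathcomp Require Import all_boot.
Set Implicit Arguments. Unset Strict Implicit. Unset Printing Implicit Defensive.

Definition simple_graph (T : finType) (e : rel T) : Prop :=
  symmetric e /\ irreflexive e.

Definition is_tree (T : finType) (e : rel T) : Prop :=
  simple_graph e /\ (forall x y : T, connect e x y) /\
  (forall s : seq T, uniq s -> 3 <= size s -> ~~ cycle e s).

(* The graph T(H): vertex (v, i) stands for v^i. *)
Definition TH_edge (T : finType) (m : nat) (eT : rel T) (eH : rel 'I_m)
  : rel (T * 'I_m) :=
  fun x y => ((x.1 == y.1) && eH x.2 y.2) || (eT x.1 y.1 && (x.2 == y.2)).

Definition role (A : finType) (V1 V2 : {set A}) (x : A) : nat :=
  if x \in V1 then 0 else if x \in V2 then 1 else 2.

Definition is_matching (A : finType) (e : rel A) (M : {set A * A}) : Prop :=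
  (forall p, p \in M -> e p.1 p.2) /\
  (forall p q, p \in M -> q \in M -> p != q ->
     [/\ p.1 != q.1, p.1 != q.2, p.2 != q.1 & p.2 != q.2]).

From mathcomp Require Import all_boot.
Set Implicit Arguments. Unset Strict Implicit. Unset Printing Implicit Defensive.

(* Fix a layer i in S. Along a walk from u to v in T (only connectivity of T
   is used) the role of w^i changes somewhere, i.e. some edge ab of T has
   a^i and b^i of different roles. The edges a^i b^i chosen for different
   layers i lie in different copies of T, so they are pairwise disjoint. *)

Lemma path_edge_neq (A : Type) (B : eqType) (e : rel A) (f : A -> B)
    (x : A) (p : seq A) :
  path e x p -> f x != f (last x p) -> exists a b, e a b /\ f a != f b.
Proof.
elim: p x => [|y p IHp] x /=; first by rewrite eqxx.
case/andP=> exy pathp fx_neq.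
have [fxy | fxy] := eqVneq (f x) (f y); last by exists x, y.
by apply: IHp pathp _; rewrite -fxy.
Qed.

Lemma connect_edge_neq (A : finType) (B : eqType) (e : rel A) (f : A -> B)
    (x y : A) :
  connect e x y -> f x != f y -> exists a b, e a b /\ f a != f b.
Proof. by case/connectP=> p pathp ->; apply: path_edge_neq. Qed.

Section LayerMatching.

Variables (T : finType) (m : nat) (eT : rel T) (eH : rel 'I_m).
Variable F : 'I_m -> T * T.

Definition layer_edge (i : 'I_m) : (T * 'I_m) * (T * 'I_m) :=
  (((F i).1, i), ((F i).2, i)).

Lemma layer_edge_inj : injective layer_edge.
Proof. by move=> i j /(congr1 (fun q => q.1.2)). Qed.

Lemma layer_edges_matching (S : {set 'I_m}) :
  {in S, forall i, eT (F i).1 (F i).2} ->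
  is_matching (TH_edge eT eH) (layer_edge @: S).
Proof.
move=> edgeF; split.
  by move=> _ /imsetP[i /edgeF eTi ->]; rewrite /TH_edge /= eTi eqxx orbT.
move=> _ _ /imsetP[i _ ->] /imsetP[j _ ->] neq_ij.
have {}neq_ij : i != j by apply: contraNneq neq_ij => ->.
by rewrite !xpair_eqE (negbTE neq_ij) !andbF.
Qed.

End LayerMatching.

Theorem lemma1 (T : finType) (eT : rel T) (m : nat) (eH : rel 'I_m)
  (V V1 V2 : {set T * 'I_m}) (u v : T) (S : {set 'I_m}) :
  is_tree eT -> simple_graph eH ->
  V1 :|: V2 = V -> [disjoint V1 & V2] ->
  (forall i, i \in S -> role V1 V2 (u, i) != role V1 V2 (v, i)) ->
  exists M : {set (T * 'I_m) * (T * 'I_m)},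
    [/\ is_matching (TH_edge eT eH) M, #|M| = #|S| &
        forall p, p \in M -> role V1 V2 p.1 != role V1 V2 p.2].
Proof.
move=> [_ [connT _]] _ _ _ roleS.
have edgeS i : exists ab : T * T, i \in S ->
    eT ab.1 ab.2 /\ role V1 V2 (ab.1, i) != role V1 V2 (ab.2, i).
  have [iS | _] := boolP (i \in S); last by exists (u, u).
  have [a [b ab_neq]] :=
    connect_edge_neq (f := fun w => role V1 V2 (w, i)) (connT u v) (roleS i iS).
  by exists (a, b).
have /fin_all_exists[F edgeF] := edgeS.
exists (layer_edge F @: S); split.
- by apply: layer_edges_matching => i /edgeF[].
- exact/card_imset/layer_edge_inj.
- by move=> _ /imsetP[i /edgeF[_ role_neq] ->].
Qed.
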